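(* Let $W=\mathrm{inv}(\pi)$ and let $W^\ast=\mathrm{inv}(\pi^\ast)$, where $\pi^\ast$ is constructed from $\pi$ as described in the context. Then $W^\ast$ has the $W$-size biased distribution.
   Context: Let $h\ge 2$, let $n_1,\dots,n_h$ be positive integers, $n=n_1+\dots+n_h\ge 4$, and let $\pi$ be a uniformly distributed permutation of the multiset $\{1^{n_1},\dots,h^{n_h}\}$ (a sequence $(\pi(1),\dots,\pi(n))$ in which each $a$ occurs $n_a$ times, all such sequences equally likely). $\mathrm{inv}(\pi)$ is the number of pairs $i<j$ with $\pi(i)>\pi(j)$. For a nonnegative integrable random variable $W$ with $\mathbb{E}W>0$, a random variable $W^\ast$ has the $W$-size biased distribution if $\mathbb{E}(Wf(W))=\mathbb{E}W\,\mathbb{E}f(W^\ast)$ for all continuous $f$ for which the left side exists. Construction of $\pi^\ast$: Let $I$ be uniformly distributed over pairs $(i,j)$ with $1\le i<j\le n$; let $J=(a,b)$, for $h\ge a>b\ge 1$, with probability $n_an_b/\sum_{c<d}n_cn_d$; $\pi,I,J$ are independent. If $I=(i,j)$ and $\pi(i)>\pi(j)$, set $\pi^\ast=\pi$. If $I=(i,j)$, $\pi(i)\le\pi(j)$ and $J=(a,b)$: choose $i^\ast$ uniformly from $\{k:\pi(k)=a\}$ and $j^\ast$ uniformly from $\{k:\pi(k)=b\}$, independently of each other and of all else. Then: (1) if $\{i,j\}\cap\{i^\ast,j^\ast\}=\emptyset$, or $i=i^\ast,j\ne j^\ast$, or $i\ne i^\ast,j=j^\ast$, obtain $\pi^\ast$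 from $\pi$ by exchanging the entries at positions $i$ and $i^\ast$ and exchanging the entries at positions $j$ and $j^\ast$; (2) if $i=j^\ast$ and $j=i^\ast$, obtain $\pi^\ast$ by exchanging the entries at positions $i$ and $j$; (3) if $i=j^\ast$, $j\ne i^\ast$, set $\pi^\ast(i)=\pi(i^\ast)$, $\pi^\ast(j)=\pi(i)$, $\pi^\ast(i^\ast)=\pi(j)$, and $\pi^\ast(k)=\pi(k)$ for $k\notin\{i,j,i^\ast\}$; (4) if $i\ne j^\ast$, $j=i^\ast$, set $\pi^\ast(i)=\pi(j)$, $\pi^\ast(j)=\pi(j^\ast)$, $\pi^\ast(j^\ast)=\pi(i)$, and $\pi^\ast(k)=\pi(k)$ for $k\notin\{i,j,j^\ast\}$. *)

From HB Require Import structures.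
From mathcomp Require Import all_boot all_order all_algebra.
From mathcomp Require Import all_classical all_reals topology normedtype.
Set Implicit Arguments. Unset Strict Implicit. Unset Printing Implicit Defensive.
Import Order.TTheory GRing.Theory Num.Theory.

(* Letters 1..h are represented by 'I_h (letter a+1 <-> ordinal a; order preserved).
   Positions 1..n are represented by 'I_n. A word is a finite function 'I_n -> 'I_h. *)

Section Defs.
Variables (h n : nat) (ns : 'I_h -> nat).

Definition word := {ffun 'I_n -> 'I_h}.

Definition inv (p : word) : nat :=
  #|[set ij : 'I_n * 'I_n | (ij.1 < ij.2)%N && (p ij.2 < p ij.1)%N]|.

Definition pos (p : word) (a : 'I_h) : {set 'I_n} := [set k | p k == a].

Definition msperm : {set word} := [set p : word | [forall a, #|pos p a| == ns a]].

Definition pairsI : {set 'I_n * 'I_n} := [set ij : 'I_n * 'I_n | (ij.1 < ij.2)%N].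
Definition pairsJ : {set 'I_h * 'I_h} := [set ab : 'I_h * 'I_h | (ab.2 < ab.1)%N].

Definition swap (p : word) (i k : 'I_n) : word :=
  [ffun x => if x == i then p k else if x == k then p i else p x].

(* the construction of pi^* given pi, I = (i,j), istar, jstar (case pi(i) <= pi(j)) *)
Definition construct (p : word) (i j ist jst : 'I_n) : word :=
  if (i == jst) && (j == ist) then swap p i j
  else if i == jst then
    [ffun x => if x == i then p ist else if x == j then p i
               else if x == ist then p j else p x]
  else if j == ist then
    [ffun x => if x == i then p j else if x == j then p jst
               else if x == jst then p i else p x]
  else swap (swap p i ist) j jst.

(* Sample space: tuples (pi, I, J, istar, jstar) *)
Definition Omega := (word * ('I_n * 'I_n) * ('I_h * 'I_h) * 'I_n * 'I_n)%type.

Definition pistar (w : Omega) : word :=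
  let: (p, ij, ab, ist, jst) := w in
  if (p ij.2 < p ij.1)%N then p else construct p ij.1 ij.2 ist jst.

Section Prob.
Variable R : realType.
Local Open Scope ring_scope.

Definition Zw : R := \sum_(ab in pairsJ) ((ns ab.1)%:R * (ns ab.2)%:R).

Definition mass (w : Omega) : R :=
  let: (p, ij, ab, ist, jst) := w in
  ((p \in msperm)%:R / #|msperm|%:R) *
  ((ij \in pairsI)%:R / #|pairsI|%:R) *
  ((ab \in pairsJ)%:R * ((ns ab.1)%:R * (ns ab.2)%:R) / Zw) *
  ((ist \in pos p ab.1)%:R / #|pos p ab.1|%:R) *
  ((jst \in pos p ab.2)%:R / #|pos p ab.2|%:R).

Definition Exp (X : Omega -> R) : R := \sum_(w : Omega) mass w * X w.

Definition W (w : Omega) : R := (inv w.1.1.1.1)%:R.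
Definition Wstar (w : Omega) : R := (inv (pistar w))%:R.

End Prob.
End Defs.

From Pilot Require Import Defs.
From HB Require Import structures.
From mathcomp Require Import all_boot all_order all_algebra.
From mathcomp Require Import all_classical all_reals topology normedtype.
From mathcomp Require Import ring fingroup perm.
Import Order.TTheory GRing.Theory Num.Theory.
Import numFieldNormedType.Exports.
Set Implicit Arguments. Unset Strict Implicit. Unset Printing Implicit Defensive.

(* W is the number of pairs I = (i, j) at which pi has an inversion, so E[W f(W)] is the
   sum over I of E[f(W); inversion at I], and P(pi(i) = a, pi(j) = b) = n_a n_b / n(n-1)
   gives E W = |I| Z / n(n-1) with Z = sum_(a > b) n_a n_b.  Given I = (i, j) and
   pi(i) <= pi(j), the construction maps the admissible (pi, ist, jst) for J = (a, b) into
   the arrangements with pi(i) = a and pi(j) = b; it commutes with the permutations of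
   positions fixing i and j, which act transitively on those arrangements, so pistar is
   uniform there.  Mixing over J with weights n_a n_b shows that pistar given I is
   distributed as pi conditioned on an inversion at I, whence
   E f(Wstar) = n(n-1) / (|I| Z) E[W f(W)] = E[W f(W)] / E W. *)

Section ConstantFibres.
Local Open Scope ring_scope.
Variables (R : nmodType) (T U : finType) (D : {set T}) (C : {set U}) (phi : T -> U).
Hypothesis phiDC : {in D, forall t, phi t \in C}.
Hypothesis card_fibre : {in C &, forall s s',
  #|[set t in D | phi t == s]| = #|[set t in D | phi t == s']|}.

Lemma sum_constant_fibres (g : U -> R) :
  (\sum_(t in D) g (phi t)) *+ #|C| = (\sum_(s in C) g s) *+ #|D|.
Proof.
have [C0|/card_gt0P[s0 s0C]] := posnP #|C|.
  by rewrite C0 mulr0n big_pred0 ?mul0rn // => s; rewrite (card0_eq C0).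
set c := #|[set t in D | phi t == s0]|.
have partD (G : T -> R) :
    \sum_(t in D) G t = \sum_(s in C) \sum_(t in [set t in D | phi t == s]) G t.
  rewrite (partition_big phi (mem C)) //; apply: eq_bigr => s _.
  by apply: eq_bigl => t; rewrite inE.
have fibreE s : s \in C -> #|[set t in D | phi t == s]| = c by move=> sC; apply: card_fibre.
have -> : #|D| = (#|C| * c)%N.
  rewrite -sum1_card (partition_big phi (mem C)) //= -sum_nat_const.
  by apply: eq_bigr => s sC; rewrite -(fibreE s sC) -sum1_card; apply: eq_bigl => t; rewrite inE.
rewrite partD mulrnA mulrnAC -sumrMnl; congr (_ *+ _); apply: eq_bigr => s sC.
rewrite -(fibreE s sC) -sumr_const; apply: eq_bigr => t.
by rewrite inE => /andP[_ /eqP ->].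
Qed.

End ConstantFibres.

Section WordAction.
Variables (h n : nat) (ns : 'I_h -> nat).
Implicit Types (p s : word h n) (r : {perm 'I_n}) (i j k l : 'I_n).

Definition act p r : word h n := [ffun x => p (r x)].

Lemma actE p r x : act p r x = p (r x).
Proof. by rewrite ffunE. Qed.

Lemma act_inj r : injective (act^~ r).
Proof.
move=> p q /ffunP E; apply/ffunP => x.
by have := E (r^-1 x)%g; rewrite !actE permKV.
Qed.

Lemma actM p r r' : act (act p r) r' = act p (r' * r)%g.
Proof. by apply/ffunP => x; rewrite !actE permM. Qed.

Lemma pos_act p r a : pos (act p r) a = r @^-1: pos p a.
Proof. by apply/setP => x; rewrite !inE actE. Qed.

Lemma msperm_act p r : (act p r \in msperm n ns) = (p \in msperm n ns).
Proof.
rewrite !inE; apply/eq_forallb => a.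
by rewrite pos_act card_preimset //; apply: perm_inj.
Qed.

Lemma swap_act p i k : swap p i k = act p (tperm i k).
Proof.
apply/ffunP => x; rewrite !ffunE.
by case: tpermP => [->|->|/eqP/negPf-> /eqP/negPf->]; rewrite ?eqxx //; case: eqP => [->|].
Qed.

Lemma perm_two_points i j k l :
  i != j -> k != l -> exists r : {perm 'I_n}, r i = k /\ r j = l.
Proof.
move=> nij nkl; exists (tperm i k * tperm (tperm i k j) l)%g.
rewrite !permM !tpermL; split=> //; apply: tpermD; last by rewrite eq_sym.
by rewrite -{2}(tpermL i k) (inj_eq perm_inj) eq_sym.
Qed.

Lemma count_mem_word s a : count_mem a [tuple s x | x < n] = #|pos s a|.
Proof.
rewrite -(map_tnth_enum [tuple _ x | x < n]) count_map -sum1_count big_enum_cond /=.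
by rewrite sum1_card; apply: eq_card => x; rewrite !inE unfold_in tnth_mktuple.
Qed.

Lemma msperm_act_perm s s' :
  s \in msperm n ns -> s' \in msperm n ns -> exists r, s' = act s r.
Proof.
move=> ms ms'; have : perm_eq [tuple s' x | x < n] [tuple s x | x < n].
  apply/allP => a _; rewrite /= !count_mem_word.
  by move: ms ms'; rewrite !inE => /forallP/(_ a)/eqP-> /forallP/(_ a)/eqP->.
case/tuple_permP => r E; exists r; apply/ffunP => x; rewrite actE.
by have := congr1 (fun t => nth (s x) t x) E; rewrite /= !nth_mktuple tnth_mktuple.
Qed.

Lemma msperm_act_fix2 s s' i j :
  s \in msperm n ns -> s' \in msperm n ns -> s i = s' i -> s j = s' j -> i != j ->
  exists r, [/\ r i = i, r j = j & s' = act s r].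
Proof.
move=> ms ms' Ei Ej nij; have [r0 E0] := msperm_act_perm ms ms'.
(* Positions [r0 i] and [i] carry the same letter of [s], so composing with their
   transposition keeps [act s _ = s'] and fixes [i]; then the same for [j]. *)
pose r1 := (r0 * tperm (r0 i) i)%g.
have r1i : r1 i = i by rewrite permM tpermL.
have s_r1 x : s (r1 x) = s' x.
  by rewrite E0 actE permM; case: tpermP => [->|->|//]; rewrite -actE -E0 Ei.
exists (r1 * tperm (r1 j) j)%g; split.
- rewrite permM r1i tpermD // ?(eq_sym j) //.
  by rewrite -{1}r1i (inj_eq perm_inj) eq_sym.
- by rewrite permM tpermL.
by apply/ffunP => x; rewrite actE permM -s_r1; case: tpermP => [->|->|//]; rewrite s_r1 Ej.
Qed.

End WordAction.

Section Construction.
Variables (h n : nat).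
Implicit Types (p : word h n) (r : {perm 'I_n}) (i j ist jst : 'I_n).

Local Ltac case_positions :=
  repeat (rewrite ?ffunE /=; case: eqP => ?; subst); try congruence.

Lemma construct_at_i p i j ist jst : i != j -> construct p i j ist jst i = p ist.
Proof. by move=> /eqP ?; rewrite /construct /swap; case_positions. Qed.

Lemma construct_at_j p i j ist jst :
  i != j -> p jst != p ist -> construct p i j ist jst j = p jst.
Proof. by move=> /eqP ? /eqP ?; rewrite /construct /swap; case_positions. Qed.

(* Distinct letters at [ist] and [jst] force [ist != jst], so each case of the
   construction is a transposition, a product of two, or a 3-cycle of positions. *)
Lemma construct_act_perm p i j ist jst :
  i != j -> p jst != p ist -> exists r, construct p i j ist jst = act p r.
Proof.
move=> /eqP ? /eqP ?; rewrite /construct.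
case: eqP => [Ei|Ni]; case: eqP => [Ej|Nj] /=.
- by exists (tperm i j); rewrite swap_act.
- exists (tperm i ist * tperm i j)%g; rewrite -actM -!swap_act /swap.
  by apply/ffunP => x; subst; case_positions.
- exists (tperm j jst * tperm i j)%g; rewrite -actM -!swap_act /swap.
  by apply/ffunP => x; subst; case_positions.
- by exists (tperm j jst * tperm i ist)%g; rewrite -actM -!swap_act.
Qed.

Lemma construct_act p r i j ist jst : r i = i -> r j = j ->
  construct (act p r) i j (r^-1 ist)%g (r^-1 jst)%g = act (construct p i j ist jst) r.
Proof.
move=> ri rj.
have r'_eq y z : ((r^-1)%g y == z) = (y == r z) by rewrite -(inj_eq (@perm_inj _ r)) permKV.
have eq_r' y z : (z == (r^-1)%g y) = (r z == y) by rewrite eq_sym r'_eq eq_sym.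
apply/ffunP => x; have -> : x = (r^-1)%g (r x) by rewrite permK.
rewrite actE permKV /construct !eq_r' ri rj.
by case: ifP => _; last case: ifP => _; last case: ifP => _;
  rewrite /swap !ffunE ?actE ?permKV ?r'_eq ?eq_r' ?permKV ?ri ?rj.
Qed.

End Construction.

Section Slices.
Variables (h n : nat) (ns : 'I_h -> nat).
Implicit Types (p s : word h n) (i j k l : 'I_n) (a b : 'I_h).
Local Notation M := (msperm n ns).

Definition slice i j a b : {set word h n} := [set s in M | (s i == a) && (s j == b)].
Definition inversions i j : {set word h n} := [set s in M | s j < s i].
Definition noninversions i j : {set word h n} := [set s in M | ~~ (s j < s i)].
(* Its cardinality [n (n - 1)] is never computed: it cancels in the final identity. *)
Definition offdiag : {set 'I_n * 'I_n} := [set kl | kl.1 != kl.2].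
Definition Zn : nat := \sum_(ab in pairsJ h) ns ab.1 * ns ab.2.

Lemma in_pos s a k : (k \in pos s a) = (s k == a).
Proof. by rewrite inE. Qed.

Lemma in_slice s i j a b : (s \in slice i j a b) = [&& s \in M, s i == a & s j == b].
Proof. by rewrite !inE. Qed.

Lemma in_inversions s i j : (s \in inversions i j) = (s \in M) && (s j < s i).
Proof. by rewrite !inE. Qed.

Lemma in_noninversions s i j : (s \in noninversions i j) = (s \in M) && ~~ (s j < s i).
Proof. by rewrite !inE. Qed.

Lemma card_pos s a : s \in M -> #|pos s a| = ns a.
Proof. by rewrite inE => /forallP/(_ a)/eqP. Qed.

Lemma pairsJ_neq (ab : 'I_h * 'I_h) : ab \in pairsJ h -> ab.1 != ab.2.
Proof. by rewrite inE => lt; apply/eqP => E; rewrite E ltnn in lt. Qed.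

Lemma pairsI_neq (ij : 'I_n * 'I_n) : ij \in pairsI n -> ij.1 != ij.2.
Proof. by rewrite inE => lt; apply/eqP => E; rewrite E ltnn in lt. Qed.

Lemma card_pairsI_le_offdiag : #|pairsI n| <= #|offdiag|.
Proof. by apply: subset_leq_card; apply/fintype.subsetP => ij /pairsI_neq; rewrite inE. Qed.

Lemma Zn_gt0 : 1 < h -> (forall a, 0 < ns a) -> 0 < Zn.
Proof.
move=> h_gt1 ns_gt0; have h_gt0 := ltnW h_gt1.
by rewrite /Zn (bigD1 (Ordinal h_gt1, Ordinal h_gt0)) ?inE //= addn_gt0 muln_gt0 !ns_gt0.
Qed.

Lemma pairsI_gt0 : 1 < n -> 0 < #|pairsI n|.
Proof.
move=> n_gt1; apply/card_gt0P; exists (Ordinal (ltnW n_gt1), Ordinal n_gt1).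
by rewrite inE.
Qed.

Lemma card_slice_indep i j k l a b :
  i != j -> k != l -> #|slice i j a b| = #|slice k l a b|.
Proof.
move=> nij nkl; have [r [ri rj]] := perm_two_points nij nkl.
rewrite -(card_preimset _ (@act_inj h n r)); apply: eq_card => s.
by rewrite inE !in_slice msperm_act !actE ri rj.
Qed.

Lemma card_slice_diag k a b : a != b -> #|slice k k a b| = 0.
Proof.
move=> nab; apply: eq_card0 => s; rewrite in_slice.
by apply/negbTE; apply: contra nab => /and3P[_ /eqP <- /eqP <-].
Qed.

Lemma sum_card_slice a b :
  \sum_(kl : 'I_n * 'I_n) #|slice kl.1 kl.2 a b| = #|M| * (ns a * ns b).
Proof.
transitivity (\sum_(s in M) #|finset.setX (pos s a) (pos s b)|); last first.
  by rewrite -sum_nat_const; apply: eq_bigr => s ms; rewrite cardsX !card_pos.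
transitivity (\sum_(kl : 'I_n * 'I_n) \sum_(s in M | (s kl.1 == a) && (s kl.2 == b)) 1).
  apply: eq_bigr => kl _; rewrite -sum1_card; apply: eq_bigl => s.
  by rewrite in_slice.
rewrite (exchange_big_dep (mem M)) => [|? ? _ /andP[] //].
apply: eq_bigr => s ms; rewrite -sum1_card; apply: eq_bigl => kl.
by rewrite [s \in M]ms inE /= !in_pos.
Qed.

Lemma card_slice i j a b : i != j -> a != b ->
  #|slice i j a b| * #|offdiag| = #|M| * (ns a * ns b).
Proof.
move=> nij nab; rewrite -sum_card_slice (bigID (mem offdiag)) /=.
rewrite [X in _ + X]big1 => [|kl]; last by rewrite inE negbK => /eqP ->; apply: card_slice_diag.
rewrite addn0 mulnC -sum_nat_const; apply: eq_bigr => kl.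
by rewrite inE => nkl; apply: card_slice_indep.
Qed.

Lemma big_inversions (R : Type) (idx : R) (op : Monoid.com_law idx) i j (F : word h n -> R) :
  \big[op/idx]_(p in inversions i j) F p =
  \big[op/idx]_(ab in pairsJ h) \big[op/idx]_(p in slice i j ab.1 ab.2) F p.
Proof.
rewrite (partition_big (fun p => (p i, p j)) (mem (pairsJ h))) => [|p]; last first.
  by rewrite !inE => /andP[].
apply: eq_bigr => -[a b] ab_J; apply: eq_bigl => p.
have ba : b < a by move: ab_J; rewrite !inE.
rewrite in_inversions in_slice xpair_eqE /= -andbA.
by case: (p i =P a) => [->|]; case: (p j =P b) => [->|]; rewrite ?andbF // ba.
Qed.

Lemma card_inversions i j : i != j -> #|inversions i j| * #|offdiag| = #|M| * Zn.
Proof.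
move=> nij; rewrite -sum1_card big_inversions big_distrl /Zn big_distrr /=.
by apply: eq_bigr => ab ab_J; rewrite sum1_card card_slice // pairsJ_neq.
Qed.

Lemma card_inversions_noninversions i j :
  #|inversions i j| + #|noninversions i j| = #|M|.
Proof.
rewrite -!sum1_card [RHS](bigID (fun s => s j < s i)) /=.
by congr (_ + _); apply: eq_bigl => s; rewrite ?in_inversions ?in_noninversions.
Qed.

End Slices.

Section Fibres.
Variables (h n : nat) (ns : 'I_h -> nat) (i j : 'I_n).
Hypothesis nij : i != j.
Local Notation M := (msperm n ns).
Implicit Types (t : word h n * 'I_n * 'I_n) (s : word h n) (a b : 'I_h) (r : {perm 'I_n}).

Definition inputs a b : {set word h n * 'I_n * 'I_n} :=
  [set t | [&& t.1.1 \in noninversions ns i j, t.1.2 \in pos t.1.1 a & t.2 \in pos t.1.1 b]].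

Lemma in_inputs a b p ist jst :
  ((p, ist, jst) \in inputs a b) = [&& p \in noninversions ns i j, p ist == a & p jst == b].
Proof. by rewrite [_ \in inputs _ _]inE /= !in_pos. Qed.

Definition construct_at t : word h n := construct t.1.1 i j t.1.2 t.2.

Lemma big_inputs (R : Type) (idx : R) (op : Monoid.com_law idx) a b F :
  \big[op/idx]_(t in inputs a b) F t =
  \big[op/idx]_(p in noninversions ns i j) \big[op/idx]_(ist in pos p a)
     \big[op/idx]_(jst in pos p b) F (p, ist, jst).
Proof.
rewrite !pair_big_dep; apply: eq_big => [[[p ist] jst]|[[p ist] jst] _] //=.
by rewrite in_inputs !in_pos andbA.
Qed.

Lemma card_inputs a b : #|inputs a b| = #|noninversions ns i j| * (ns a * ns b).
Proof.
rewrite -sum1_card big_inputs -sum_nat_const; apply: eq_bigr => p.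
rewrite in_noninversions => /andP[ms _]; rewrite -!(card_pos a ms) -(card_pos b ms).
by rewrite -sum_nat_const; apply: eq_bigr => ist _; rewrite sum1_card.
Qed.

Lemma construct_in_slice a b t :
  a != b -> t \in inputs a b -> construct_at t \in slice ns i j a b.
Proof.
case: t => [[p ist] jst] nab; rewrite in_inputs in_noninversions.
move=> /and3P[/andP[ms _] /eqP pa /eqP pb].
have npb : p jst != p ist by rewrite pa pb eq_sym.
rewrite in_slice /construct_at /= construct_at_i // construct_at_j // pa pb !eqxx !andbT.
by have [r ->] := construct_act_perm nij npb; rewrite msperm_act.
Qed.

Definition transport r t := (act t.1.1 r, (r^-1)%g t.1.2, (r^-1)%g t.2).

Lemma transport_inj r : injective (transport r).
Proof. by move=> [[? ?] ?] [[? ?] ?] [/act_inj -> /perm_inj -> /perm_inj ->]. Qed.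

Section FixedPositions.
Variable r : {perm 'I_n}.
Hypotheses (ri : r i = i) (rj : r j = j).

Lemma transport_inputs a b t : (transport r t \in inputs a b) = (t \in inputs a b).
Proof.
case: t => [[p ist] jst].
by rewrite in_inputs in_inputs !in_noninversions msperm_act !actE ri rj !permKV.
Qed.

Lemma construct_transport t : construct_at (transport r t) = act (construct_at t) r.
Proof. exact: construct_act. Qed.

End FixedPositions.

Definition fibre a b s : {set word h n * 'I_n * 'I_n} :=
  [set t in inputs a b | construct_at t == s].

Lemma card_fibre_act a b s r : r i = i -> r j = j -> #|fibre a b (act s r)| = #|fibre a b s|.
Proof.
move=> ri rj; rewrite -(card_preimset _ (@transport_inj r)); apply: eq_card => t.
rewrite inE [_ \in fibre _ _ _]inE [t \in fibre _ _ _]inE.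
by rewrite transport_inputs // construct_transport // (inj_eq (@act_inj _ _ r)).
Qed.

(* The stabiliser of [i] and [j] acts transitively on a slice and the construction is
   equivariant, so all fibres over a slice have the same size. *)
Lemma card_fibre_slice a b s s' : s \in slice ns i j a b -> s' \in slice ns i j a b ->
  #|fibre a b s| = #|fibre a b s'|.
Proof.
rewrite !in_slice => /and3P[ms /eqP si /eqP sj] /and3P[ms' /eqP si' /eqP sj'].
have [r [ri rj ->]] := msperm_act_fix2 ms ms' (etrans si (esym si')) (etrans sj (esym sj')) nij.
by rewrite card_fibre_act.
Qed.

Lemma sum_construct_inputs (R : nmodType) a b (G : word h n -> R) : a != b ->
  ((\sum_(t in inputs a b) G (construct_at t)) *+ #|slice ns i j a b| =
   (\sum_(s in slice ns i j a b) G s) *+ #|inputs a b|)%R.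
Proof.
move=> nab; apply: sum_constant_fibres => [t|s s' sC s'C].
  exact: construct_in_slice.
exact: card_fibre_slice.
Qed.

End Fibres.

Section SizeBiasPair.
Variables (R : numDomainType) (h n : nat) (ns : 'I_h -> nat) (i j : 'I_n).
Hypotheses (ns_gt0 : forall a, 0 < ns a) (nij : i != j).
Local Notation M := (msperm n ns).
Local Open Scope ring_scope.

Lemma sum_choices_const p (x : R) : p \in M ->
  \sum_(ab in pairsJ h) \sum_(ist in pos p ab.1) \sum_(jst in pos p ab.2) x = x *+ Zn ns.
Proof.
move=> ms; rewrite /Zn -sumrMnr; apply: eq_bigr => ab _.
by rewrite !sumr_const !(card_pos _ ms) mulrnAC mulrnA.
Qed.

Lemma sum_construct_slice a b (G : word h n -> R) : a != b ->
  (\sum_(t in inputs ns i j a b) G (construct_at i j t)) * #|M|%:R =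
  #|noninversions ns i j|%:R * #|offdiag n|%:R * \sum_(s in slice ns i j a b) G s.
Proof.
move=> nab; have nab0 : (ns a * ns b)%:R != 0 :> R.
  by rewrite pnatr_eq0 muln_eq0 negb_or -!lt0n !ns_gt0.
have E := sum_construct_inputs ns nij G nab; rewrite card_inputs in E.
rewrite -[X in X = _]mulr_natr -[X in _ = X]mulr_natr in E.
have /(congr1 (GRing.natmul (1 : R))) := card_slice ns nij nab; rewrite !natrM => C.
by apply: (mulIf nab0); rewrite natrM -[LHS]mulrA -C mulrA E natrM; ring.
Qed.

Lemma sum_pistar_pair (G : word h n -> R) : (0 < #|M|)%N ->
  \sum_(p in M) \sum_(ab in pairsJ h) \sum_(ist in pos p ab.1) \sum_(jst in pos p ab.2)
     G (pistar (p, (i, j), ab, ist, jst)) =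
  #|offdiag n|%:R * \sum_(p in inversions ns i j) G p.
Proof.
move=> M_gt0; have M0 : #|M|%:R != 0 :> R by rewrite pnatr_eq0 -lt0n.
set S := \sum_(p in inversions ns i j) G p.
have inv_part : \sum_(p in M | (p j < p i)%N) \sum_(ab in pairsJ h) \sum_(ist in pos p ab.1)
    \sum_(jst in pos p ab.2) G (pistar (p, (i, j), ab, ist, jst)) = S *+ Zn ns.
  rewrite -sumrMnl; apply: eq_big => [p|p /andP[ms inv_p]]; first by rewrite in_inversions.
  rewrite -(sum_choices_const _ ms); apply: eq_bigr => ab _; apply: eq_bigr => ist _.
  by apply: eq_bigr => jst _; rewrite /pistar /= inv_p.
have noninv_part : \sum_(p in M | ~~ (p j < p i)%N) \sum_(ab in pairsJ h) \sum_(ist in pos p ab.1)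
    \sum_(jst in pos p ab.2) G (pistar (p, (i, j), ab, ist, jst)) =
    \sum_(ab in pairsJ h) \sum_(t in inputs ns i j ab.1 ab.2) G (construct_at i j t).
  transitivity (\sum_(p in noninversions ns i j) \sum_(ab in pairsJ h)
      \sum_(ist in pos p ab.1) \sum_(jst in pos p ab.2) G (construct_at i j (p, ist, jst))).
    apply: eq_big => [p|p /andP[_ noninv_p]]; first by rewrite in_noninversions.
    apply: eq_bigr => ab _; apply: eq_bigr => ist _.
    by apply: eq_bigr => jst _; rewrite /pistar /= (negbTE noninv_p).
  by rewrite exchange_big; apply: eq_bigr => ab _; rewrite big_inputs.
apply: (mulIf M0); rewrite (bigID (fun p : word h n => (p j < p i)%N)) /=.
rewrite inv_part noninv_part mulrDl mulr_suml.
rewrite (eq_bigr (fun ab => #|noninversions ns i j|%:R * #|offdiag n|%:R *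
    \sum_(s in slice ns i j ab.1 ab.2) G s)) => [|ab ab_J]; last first.
  by apply: sum_construct_slice; apply: pairsJ_neq.
rewrite -mulr_sumr -big_inversions -/S.
have card_inv : #|inversions ns i j|%:R * #|offdiag n|%:R = #|M|%:R * (Zn ns)%:R :> R.
  by rewrite -!natrM card_inversions.
have card_M : #|M|%:R = #|inversions ns i j|%:R + #|noninversions ns i j|%:R :> R.
  by rewrite -natrD card_inversions_noninversions.
by rewrite -[S *+ _]mulr_natr -(mulrA S) (mulrC (Zn ns)%:R) -card_inv [in RHS]card_M; ring.
Qed.

End SizeBiasPair.

Section Expectations.
Variables (R : realType) (h n : nat) (ns : 'I_h -> nat).
Local Notation M := (msperm n ns).
Local Open Scope ring_scope.

Lemma ZwE : Zw ns R = (Zn ns)%:R.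
Proof. by rewrite /Zw /Zn natr_sum; apply: eq_bigr => ab _; rewrite natrM. Qed.

(* All admissible outcomes [(p, ij, ab, ist, jst)] are equally likely: the weight
   [n_a n_b] of [J = (a, b)] cancels against the number of choices of [ist] and [jst]. *)
Lemma Exp_uniform (Y : Omega h n -> R) :
  Exp ns Y = (#|M|%:R * #|pairsI n|%:R * (Zn ns)%:R)^-1 *
    \sum_(p in M) \sum_(ij in pairsI n) \sum_(ab in pairsJ h)
      \sum_(ist in pos p ab.1) \sum_(jst in pos p ab.2) Y (p, ij, ab, ist, jst).
Proof.
rewrite !pair_big_dep big_mkcond mulr_sumr /Exp.
apply: eq_bigr => -[[[[p ij] ab] ist] jst] _ /=; rewrite /mass ZwE !invfM.
move: (#|M|%:R)^-1 (#|pairsI n|%:R)^-1 ((Zn ns)%:R)^-1 => x y z.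
case ms: (p \in M); last by rewrite /= !(mulr0n, mul0r, mulr0).
have card_pos0 c k : k \in pos p c -> (ns c)%:R != 0 :> R.
  by move=> kc; rewrite -(card_pos _ ms) pnatr_eq0 -lt0n; apply/card_gt0P; exists k.
case ia: (ist \in pos p ab.1); last by rewrite /= andbF !(mulr0n, mul0r, mulr0).
case jb: (jst \in pos p ab.2); last by rewrite /= andbF !(mulr0n, mul0r, mulr0).
have na := card_pos0 _ _ ia; have nb := card_pos0 _ _ jb.
rewrite !(card_pos _ ms); case: (ij \in pairsI n); case: (ab \in pairsJ h) => /=;
  by field; rewrite na nb.
Qed.

Lemma Exp_msperm0 (Y : Omega h n -> R) : #|M| = 0%N -> Exp ns Y = 0.
Proof. by move=> M0; rewrite Exp_uniform M0 !mul0r invr0 mul0r. Qed.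

Lemma Exp_pi (F : word h n -> R) : (0 < #|pairsI n|)%N -> (0 < Zn ns)%N ->
  Exp ns (fun w => F w.1.1.1.1) = (#|M|%:R)^-1 * \sum_(p in M) F p.
Proof.
move=> I_gt0 Z_gt0; rewrite Exp_uniform.
transitivity ((#|M|%:R * #|pairsI n|%:R * (Zn ns)%:R)^-1 *
  ((\sum_(p in M) F p) * (Zn ns)%:R * #|pairsI n|%:R)).
  congr (_ * _); rewrite !mulr_natr -!sumrMnl; apply: eq_bigr => p ms.
  by rewrite -sumr_const; apply: eq_bigr => ij _ /=; apply: sum_choices_const.
have I0 : #|pairsI n|%:R != 0 :> R by rewrite pnatr_eq0 -lt0n.
have Z0 : (Zn ns)%:R != 0 :> R by rewrite pnatr_eq0 -lt0n.
rewrite !invfM; move: (#|M|%:R)^-1 => m.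
by field; rewrite I0 Z0.
Qed.

Lemma inv_sum (p : word h n) :
  (Defs.inv p)%:R = \sum_(ij in pairsI n | (p ij.2 < p ij.1)%N) 1 :> R.
Proof. by rewrite /Defs.inv -sum1_card natr_sum; apply: eq_bigl => ij; rewrite !inE. Qed.

Lemma Exp_W_mul (F : word h n -> R) : (0 < #|pairsI n|)%N -> (0 < Zn ns)%N ->
  Exp ns (fun w => W R w * F w.1.1.1.1) =
  (#|M|%:R)^-1 * \sum_(ij in pairsI n) \sum_(p in inversions ns ij.1 ij.2) F p.
Proof.
move=> I_gt0 Z_gt0; rewrite (Exp_pi (fun p => (Defs.inv p)%:R * F p)) //; congr (_ * _).
under eq_bigr do rewrite inv_sum mulr_suml.
rewrite (exchange_big_dep (mem (pairsI n))) => [|p ij _ /andP[] //].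
apply: eq_bigr => ij ijI; apply: eq_big => [p|p _]; last by rewrite mul1r.
by rewrite in_inversions [ij \in _]ijI.
Qed.

Lemma Exp_W : (0 < #|M|)%N -> (0 < #|pairsI n|)%N -> (0 < Zn ns)%N ->
  Exp ns (fun w : Omega h n => W R w) = #|pairsI n|%:R * (Zn ns)%:R / #|offdiag n|%:R.
Proof.
move=> M_gt0 I_gt0 Z_gt0.
have M0 : #|M|%:R != 0 :> R by rewrite pnatr_eq0 -lt0n.
have K0 : #|offdiag n|%:R != 0 :> R.
  by rewrite pnatr_eq0 -lt0n (leq_trans I_gt0) ?card_pairsI_le_offdiag.
transitivity (Exp ns (fun w : Omega h n => W R w * (fun _ => 1) w.1.1.1.1)).
  by apply: eq_bigr => w _; rewrite mulr1.
rewrite (Exp_W_mul (fun _ => 1)) //.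
under eq_bigr => ij ijI.
  rewrite sumr_const -[1 *+ _]/(_%:R) -[_%:R](mulfK K0) -natrM card_inversions ?pairsI_neq //.
  over.
by rewrite sumr_const -[_ *+ #|pairsI n|]mulr_natl natrM; field; rewrite M0 K0.
Qed.

Lemma Exp_pistar (G : word h n -> R) : (forall a, 0 < ns a)%N -> (0 < #|M|)%N ->
  Exp ns (fun w => G (pistar w)) = (#|M|%:R * #|pairsI n|%:R * (Zn ns)%:R)^-1 *
    (#|offdiag n|%:R * \sum_(ij in pairsI n) \sum_(p in inversions ns ij.1 ij.2) G p).
Proof.
move=> ns_gt0 M_gt0; rewrite Exp_uniform exchange_big; congr (_ * _); rewrite mulr_sumr.
apply: eq_bigr => -[i j] ijI; apply: sum_pistar_pair => //.
exact: pairsI_neq.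
Qed.

End Expectations.

Local Open Scope ring_scope.
Theorem lemma2p8 (R : realType) (h n : nat) (ns : 'I_h -> nat)
  (Hh : (2 <= h)%N) (Hpos : forall a, (0 < ns a)%N)
  (Hsum : (\sum_(a < h) ns a)%N = n) (Hn : (4 <= n)%N)
  (f : R -> R) (Hf : continuous f) :
  Exp ns (fun w : Omega h n => W R w * f (W R w)) =
  Exp ns (fun w : Omega h n => W R w) *
  Exp ns (fun w : Omega h n => f (Wstar R w)).
Proof.
have I_gt0 : (0 < #|pairsI n|)%N by apply: pairsI_gt0; apply: leq_trans Hn.
have Z_gt0 := Zn_gt0 Hh Hpos.
have [M0|M_gt0] := posnP #|msperm n ns|; first by rewrite !Exp_msperm0 ?mul0r.
pose G (p : word h n) := f (Defs.inv p)%:R.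
rewrite (Exp_W_mul G) // Exp_W // (Exp_pistar G) //.
have K_gt0 := leq_trans I_gt0 (card_pairsI_le_offdiag n).
by field; rewrite !pnatr_eq0 -!lt0n M_gt0 I_gt0 Z_gt0 K_gt0.
Qed.
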